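(* Let $A$ be a finite-dimensional Hopf algebra over $k$, $G$ a finite group acting on $A$ by Hopf algebra automorphisms, and $K=A\natural k^G$. Then for every positive integer $m$, $$\nu_m(K)=\sum_{g\in G,\ g^m=1}\nu_{m,g}(A).$$
   Context: For a finite-dimensional Hopf algebra $H$ and a Hopf automorphism $\tau$ whose order divides $m$, define $P_{m-1,\tau}(h)=\sum(\tau^{m-1}\cdot h_1)(\tau^{m-2}\cdot h_2)\cdots(\tau\cdot h_{m-1})$ (Sweedler notation) and $\nu_{m,\tau}(H)=\mathrm{Tr}(S\circ P_{m-1,\tau})$, the trace of the linear map $S\circ P_{m-1,\tau}:H\to H$; $\nu_m(H)=\nu_{m,\mathrm{id}}(H)$. $k^G$ has basis $\{p_x\}_{x\in G}$ with $p_xp_y=\delta_{x,y}p_x$. The smash coproduct $K=A\natural k^G$ is $A\otimes k^G$ (elements written $a\natural p_x$) with tensor product algebra structure, comultiplication $\Delta(a\natural p_x)=\sum_{y\in G}(a_1\natural p_y)\otimes((y^{-1}\cdot a_2)\natural p_{y^{-1}x})$, counit $\varepsilon(a\natural p_x)=\delta_{1,x}\varepsilon(a)$, antipode $S(a\natural p_x)=(x^{-1}\cdot S(a))\natural p_{x^{-1}}$. *)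

(* Finite-dimensional Hopf algebras are encoded in coordinates:
   a Hopf algebra of dimension #|I| over a field k has carrier the coordinate
   space {ffun I -> k} (basis e_i, i : I), tensor square {ffun I * I -> k}
   (basis e_i (x) e_j), and structure maps given as functions which the Hopf
   axioms require to be (bi)linear. *)
From HB Require Import structures.
From mathcomp Require Import all_boot all_order all_algebra all_fingroup.
Set Implicit Arguments. Unset Strict Implicit. Unset Printing Implicit Defensive.
Import GRing.Theory.
Local Open Scope ring_scope.

Section Hopf.
Variables (k : fieldType) (I : finType).

Definition vec := {ffun I -> k}.
Definition vec2 := {ffun (I * I) -> k}.

Definition bvec (i : I) : vec := [ffun j => (i == j)%:R].
Definition vscale (a : k) (v : vec) : vec := [ffun j => a * v j].
Definition vscale2 (a : k) (t : vec2) : vec2 := [ffun p => a * t p].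
Definition tens (v w : vec) : vec2 := [ffun p => v p.1 * w p.2].

Definition linmap (f : vec -> vec) :=
  forall (a : k) (x y : vec), f (vscale a x + y) = vscale a (f x) + f y.

(* f (x) g applied to a tensor, for linear f, g *)
Definition tmap (f g : vec -> vec) (t : vec2) : vec2 :=
  \sum_(p : I * I) vscale2 (t p) (tens (f (bvec p.1)) (g (bvec p.2))).

Definition trace (f : vec -> vec) : k := \sum_(i : I) f (bvec i) i.

Record hopf_ops := HopfOps {
  hmul : vec -> vec -> vec;
  hone : vec;
  hcomul : vec -> vec2;
  hcounit : vec -> k;
  hanti : vec -> vec
}.

Variable H : hopf_ops.

Definition mul2 (t u : vec2) : vec2 :=
  \sum_(p : I * I) \sum_(q : I * I)
     vscale2 (t p * u q) (tens (hmul H (bvec p.1) (bvec q.1))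
                               (hmul H (bvec p.2) (bvec q.2))).

Definition is_hopf : Prop :=
  [/\ (forall y, linmap (fun x => hmul H x y)),
      (forall x, linmap (fun y => hmul H x y)),
      (forall a x y, hcomul H (vscale a x + y) = vscale2 a (hcomul H x) + hcomul H y),
      (forall a x y, hcounit H (vscale a x + y) = a * hcounit H x + hcounit H y)
    & linmap (hanti H)] /\
  [/\ (forall x y z, hmul H (hmul H x y) z = hmul H x (hmul H y z)),
      (forall x, hmul H (hone H) x = x)
    & (forall x, hmul H x (hone H) = x)] /\
  [/\ (forall h (i j l : I),
         \sum_(a : I) hcomul H h (a, l) * hcomul H (bvec a) (i, j)
         = \sum_(b : I) hcomul H h (i, b) * hcomul H (bvec b) (j, l)),
      (forall h, [ffun l => \sum_(a : I) hcomul H h (a, l) * hcounit H (bvec a)] = h)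
    & (forall h, [ffun i => \sum_(b : I) hcomul H h (i, b) * hcounit H (bvec b)] = h)] /\
  [/\ (forall x y, hcomul H (hmul H x y) = mul2 (hcomul H x) (hcomul H y)),
      hcomul H (hone H) = tens (hone H) (hone H),
      (forall x y, hcounit H (hmul H x y) = hcounit H x * hcounit H y)
    & hcounit H (hone H) = 1] /\
  (forall h, \sum_(p : I * I) vscale (hcomul H h p) (hmul H (hanti H (bvec p.1)) (bvec p.2))
             = vscale (hcounit H h) (hone H)) /\
  (forall h, \sum_(p : I * I) vscale (hcomul H h p) (hmul H (bvec p.1) (hanti H (bvec p.2)))
             = vscale (hcounit H h) (hone H)).

Definition is_hopf_aut (t : vec -> vec) : Prop :=
  (linmap t /\ bijective t) /\
  [/\ (forall x y, t (hmul H x y) = hmul H (t x) (t y)),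
      t (hone H) = hone H,
      (forall x, hcomul H (t x) = tmap t t (hcomul H x))
    & (forall x, hcounit H (t x) = hcounit H x)].

Definition conv (f g : vec -> vec) (h : vec) : vec :=
  \sum_(p : I * I) vscale (hcomul H h p) (hmul H (f (bvec p.1)) (g (bvec p.2))).

(* P_{r,tau} = tau^r * tau^(r-1) * ... * tau^1 (convolution), i.e.
   P_{r,tau}(h) = sum (tau^r h_1)(tau^(r-1) h_2)...(tau h_r); the empty
   convolution product (r = 0) is the convolution unit h |-> eps(h) 1. *)
Fixpoint Ptw (r : nat) (tau : vec -> vec) : vec -> vec :=
  match r with
  | 0 => fun h => vscale (hcounit H h) (hone H)
  | r'.+1 => conv (iter r'.+1 tau) (Ptw r' tau)
  end.

Definition nu_tw (m : nat) (tau : vec -> vec) : k :=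
  trace (fun h => hanti H (Ptw m.-1 tau h)).

Definition nu (m : nat) : k := nu_tw m id.

End Hopf.

Arguments vec : clear implicits.
Arguments vec2 : clear implicits.

(* The smash coproduct K = A # k^G, with basis e_i # p_x indexed by I * gT. *)
Section Smash.
Variables (k : fieldType) (I : finType) (gT : finGroupType).
Variables (H : hopf_ops k I) (act : gT -> vec k I -> vec k I).

(* the k^G-component: x = sum_g slice x g # p_g *)
Definition slice (x : vec k (I * gT)%type) (g : gT) : vec k I := [ffun i => x (i, g)].

(* (a # p_x)(b # p_y) = ab # delta_{x,y} p_x *)
Definition smash_mul (x y : vec k (I * gT)%type) : vec k (I * gT)%type :=
  [ffun q => hmul H (slice x q.2) (slice y q.2) q.1].

(* 1 # 1 = sum_x 1 # p_x *)
Definition smash_one : vec k (I * gT)%type := [ffun q => hone H q.1].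

(* Delta(a # p_x) = sum_y (a_1 # p_y) (x) ((y^-1 . a_2) # p_{y^-1 x}) *)
Definition smash_comul (x : vec k (I * gT)%type) : vec2 k (I * gT)%type :=
  [ffun q : (I * gT) * (I * gT) =>
     tmap id (act (q.1.2)^-1%g) (hcomul H (slice x (q.1.2 * q.2.2)%g)) (q.1.1, q.2.1)].

(* eps(a # p_x) = delta_{1,x} eps(a) *)
Definition smash_counit (x : vec k (I * gT)%type) : k := hcounit H (slice x 1%g).

(* S(a # p_x) = (x^-1 . S(a)) # p_{x^-1} *)
Definition smash_anti (x : vec k (I * gT)%type) : vec k (I * gT)%type :=
  [ffun q => act q.2 (hanti H (slice x (q.2)^-1%g)) q.1].

Definition smash_coprod : hopf_ops k (I * gT)%type :=
  HopfOps smash_mul smash_one smash_comul smash_counit smash_anti.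

End Smash.

From HB Require Import structures.
From mathcomp Require Import all_boot all_order all_algebra all_fingroup.
Import GRing.Theory.
Local Open Scope ring_scope.
Set Implicit Arguments. Unset Strict Implicit. Unset Printing Implicit Defensive.

(* Multiplication in K = A # k^G is componentwise along k^G, and the
   (p_y, p_(y^-1 x))-part of Delta(a # p_x) is (a_1 # p_y) (x) (y^-1.a_2 # p_(y^-1 x)).
   By induction on r, the p_y-component of P_r(a # p_x) is zero unless x = y^r,
   and then equals P_(r,y)(y^-r . a).  Since S(b # p_x) lives over p_(x^-1), the
   diagonal block of S o P_(m-1) at p_x is nonzero only when x = (x^-1)^(m-1),
   i.e. x^m = 1, and it is then x o S o P_(m-1,x^-1) o x^-1, whose trace is
   nu_(m,x^-1)(A) by cyclicity of the trace.  Reindexing by x |-> x^-1 ends. *)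

Section Coordinates.
Variables (k : fieldType) (I : finType).
Implicit Types (f g : vec k I -> vec k I) (u v : vec k I).

Lemma vscale1 v : vscale 1 v = v.
Proof. by apply/ffunP=> j; rewrite ffunE mul1r. Qed.

Lemma linmapD f : linmap f -> forall u v, f (u + v) = f u + f v.
Proof. by move=> lin_f u v; have := lin_f 1 u v; rewrite !vscale1. Qed.

Lemma linmap0 f : linmap f -> f 0 = 0.
Proof. by move=> lin_f; apply: (@addrI _ (f 0)); rewrite addr0 -linmapD // addr0. Qed.

Lemma linmapZ f : linmap f -> forall a v, f (vscale a v) = vscale a (f v).
Proof. by move=> lin_f a v; have := lin_f a v 0; rewrite (linmap0 lin_f) !addr0. Qed.

Lemma linmap_sum (J : finType) f (F : J -> vec k I) :
  linmap f -> f (\sum_j F j) = \sum_j f (F j).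
Proof. by move=> lin_f; apply: (big_morph f (linmapD lin_f) (linmap0 lin_f)). Qed.

Lemma linmap_comp f g : linmap f -> linmap g -> linmap (f \o g).
Proof. by move=> lin_f lin_g a u v /=; rewrite lin_g lin_f. Qed.

Lemma vec_bvecE v : v = \sum_i vscale (v i) (bvec k i).
Proof.
apply/ffunP=> j; rewrite sum_ffunE (bigD1 j) //= !ffunE eqxx mulr1 big1 ?addr0 //.
by move=> i /negPf neq_ij; rewrite !ffunE neq_ij mulr0.
Qed.

Lemma linmap_coordE f : linmap f -> forall v j, f v j = \sum_i v i * f (bvec k i) j.
Proof.
move=> lin_f v j; rewrite {1}(vec_bvecE v) linmap_sum // sum_ffunE.
by apply: eq_bigr => i _; rewrite linmapZ // ffunE.
Qed.

Lemma bilin_coordE (Phi : vec k I -> vec k I -> vec k I) :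
  (forall v, linmap (Phi ^~ v)) -> (forall u, linmap (Phi u)) ->
  forall u v c, Phi u v c = \sum_(q : I * I) u q.1 * v q.2 * Phi (bvec k q.1) (bvec k q.2) c.
Proof.
move=> lin_l lin_r u v c; rewrite (linmap_coordE (lin_l v)).
rewrite -(pair_bigA _ (fun i j => u i * v j * Phi (bvec k i) (bvec k j) c)) /=.
apply: eq_bigr => i _; rewrite (linmap_coordE (lin_r _)) mulr_sumr.
by apply: eq_bigr => j _; rewrite mulrA.
Qed.

Lemma tmap_contract (Phi : vec k I -> vec k I -> vec k I) f g (t : vec2 k I) c :
  (forall v, linmap (Phi ^~ v)) -> (forall u, linmap (Phi u)) ->
  \sum_(p : I * I) tmap f g t p * Phi (bvec k p.1) (bvec k p.2) c
  = \sum_(p : I * I) t p * Phi (f (bvec k p.1)) (g (bvec k p.2)) c.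
Proof.
move=> lin_l lin_r.
under [RHS]eq_bigr => p _ do rewrite (bilin_coordE lin_l lin_r) mulr_sumr.
rewrite exchange_big /=; apply: eq_bigr => q _.
rewrite /tmap sum_ffunE mulr_suml; apply: eq_bigr => p _.
by rewrite !ffunE !mulrA.
Qed.

Lemma traceC f g : linmap f -> linmap g -> trace (f \o g) = trace (g \o f).
Proof.
move=> lin_f lin_g; rewrite /trace /=.
under eq_bigr => i _ do rewrite (linmap_coordE lin_f).
under [RHS]eq_bigr => i _ do rewrite (linmap_coordE lin_g).
by rewrite exchange_big; apply: eq_bigr => i _; apply: eq_bigr => j _; rewrite mulrC.
Qed.

End Coordinates.

Section Convolution.
Variables (k : fieldType) (I : finType) (H : hopf_ops k I).
Hypothesis mul_linl : forall v, linmap (fun u => hmul H u v).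
Hypothesis mul_linr : forall u, linmap (hmul H u).
Hypothesis comul_lin :
  forall a u v, hcomul H (vscale a u + v) = vscale2 a (hcomul H u) + hcomul H v.
Hypothesis counit_lin :
  forall a u v, hcounit H (vscale a u + v) = a * hcounit H u + hcounit H v.

Lemma hmul_vscale a b u v : hmul H (vscale a u) (vscale b v) = vscale (a * b) (hmul H u v).
Proof.
have -> := linmapZ (mul_linr (vscale a u)) b v.
have -> := linmapZ (mul_linl v) a u.
by apply/ffunP=> c; rewrite !ffunE mulrCA mulrA.
Qed.

Lemma eq_conv f f' g g' : f =1 f' -> g =1 g' -> conv H f g =1 conv H f' g'.
Proof. by move=> eq_f eq_g h; apply: eq_bigr => p _; rewrite eq_f eq_g. Qed.

Lemma conv_linmap f g : linmap (conv H f g).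
Proof.
move=> a u v; apply/ffunP=> c; rewrite /conv comul_lin !ffunE !sum_ffunE mulr_sumr -big_split.
by apply: eq_bigr => p _; rewrite !ffunE mulrDl mulrA.
Qed.

Lemma Ptw_linmap r tau : linmap (Ptw H r tau).
Proof.
case: r => [|r] /=; last exact: conv_linmap.
by move=> a u v; apply/ffunP=> c; rewrite !ffunE counit_lin mulrDl mulrA.
Qed.

Lemma conv_coalg_morph f g s : linmap f -> linmap g -> linmap s ->
  (forall u, hcomul H (s u) = tmap s s (hcomul H u)) ->
  forall h, conv H f g (s h) = conv H (f \o s) (g \o s) h.
Proof.
move=> lin_f lin_g lin_s comul_s h; apply/ffunP=> c; rewrite /conv !sum_ffunE comul_s.
under eq_bigr => p _ do rewrite ffunE.
rewrite (@tmap_contract _ _ (fun u v => hmul H (f u) (g v))) => [|v|u].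
- by apply: eq_bigr => p _; rewrite ffunE.
- exact: linmap_comp (mul_linl _) lin_f.
- exact: linmap_comp (mul_linr _) lin_g.
Qed.

Section Twisted.
Variables (gT : finGroupType) (act : gT -> vec k I -> vec k I).
Hypothesis act1 : act 1%g =1 id.
Hypothesis actM : forall g h : gT, act (g * h)%g =1 act g \o act h.
Hypothesis act_lin : forall g, linmap (act g).
Hypothesis act_comul : forall g u, hcomul H (act g u) = tmap (act g) (act g) (hcomul H u).

Lemma act_comp g h v : act g (act h v) = act (g * h)%g v.
Proof. by rewrite actM. Qed.

Lemma iter_act y n : iter n (act y) =1 act (y ^+ n)%g.
Proof. by elim: n => [|n IH] v /=; rewrite ?act1 // IH act_comp -expgS. Qed.

Lemma PtwS_act y r h :
  Ptw H r.+1 (act y) (act (y ^- r.+1)%g h)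
  = conv H id (Ptw H r (act y) \o act (y ^- r)%g \o act y^-1%g) h.
Proof.
rewrite /= (eq_conv (iter_act y r.+1) (frefl _)) conv_coalg_morph //; last exact: Ptw_linmap.
by apply: eq_conv => v /=; rewrite act_comp ?mulgV ?act1 // -invMg -expgS.
Qed.

End Twisted.
End Convolution.

Lemma sum_pair_delta (k : fieldType) (I G : finType) (F : (I * G) * (I * G) -> k) (y z : G) :
  \sum_p ((p.1.2 == y)%:R * (p.2.2 == z)%:R) * F p = \sum_(q : I * I) F ((q.1, y), (q.2, z)).
Proof.
rewrite (bigID (fun p => (p.1.2 == y) && (p.2.2 == z))) /= [X in _ + X]big1 ?addr0; last first.
  by move=> p; case: (p.1.2 == y); case: (p.2.2 == z) => //= _; rewrite ?mulr0 !mul0r.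
under eq_bigr => p /andP[/eqP-> /eqP->] do rewrite !eqxx !mul1r.
rewrite (reindex_onto (fun q : I * I => ((q.1, y), (q.2, z))) (fun p => (p.1.1, p.2.1))) /=.
  by apply: eq_bigl => -[i j] /=; rewrite !eqxx.
by move=> [[i y'] [j z']] /= /andP[/eqP-> /eqP->].
Qed.

Lemma slice_bvec (k : fieldType) (I : finType) (gT : finGroupType) (q : I * gT) y :
  slice (bvec k q) y = vscale (q.2 == y)%:R (bvec k q.1).
Proof.
case: q => i z; apply/ffunP => j; rewrite !ffunE xpair_eqE andbC.
by case: (z == y); rewrite ?mul1r ?mul0r.
Qed.

Lemma sum_pair_r (R : nmodType) (I J : finType) (F : I * J -> R) :
  \sum_q F q = \sum_j \sum_i F (i, j).
Proof. by rewrite [RHS]exchange_big pair_bigA; apply: eq_bigr => -[]. Qed.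

Lemma eq_expVg_pred (gT : finGroupType) (x : gT) m :
  (0 < m)%N -> (x == x^-1 ^+ m.-1)%g = (x ^+ m == 1)%g.
Proof. by move=> m_gt0; rewrite expgVn eq_sym eq_invg_mul -expgSr prednK. Qed.

Section Smash.
Variables (k : fieldType) (I : finType) (H : hopf_ops k I).
Variables (gT : finGroupType) (act : gT -> vec k I -> vec k I).
Hypothesis mul_linl : forall v, linmap (fun u => hmul H u v).
Hypothesis mul_linr : forall u, linmap (hmul H u).
Hypothesis comul_lin :
  forall a u v, hcomul H (vscale a u + v) = vscale2 a (hcomul H u) + hcomul H v.
Hypothesis counit_lin :
  forall a u v, hcounit H (vscale a u + v) = a * hcounit H u + hcounit H v.
Hypothesis anti_lin : linmap (hanti H).
Hypothesis act1 : act 1%g =1 id.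
Hypothesis actM : forall g h : gT, act (g * h)%g =1 act g \o act h.
Hypothesis act_lin : forall g, linmap (act g).
Hypothesis act_comul : forall g u, hcomul H (act g u) = tmap (act g) (act g) (hcomul H u).

Local Notation K := (smash_coprod H act).

Lemma smash_conv_slice G Q y z h : linmap Q ->
  (forall q, slice (G (bvec k q)) y = vscale (q.2 == z)%:R (Q (bvec k q.1))) ->
  slice (conv K id G h) y = conv H id (Q \o act y^-1%g) (slice h (y * z)%g).
Proof.
move=> lin_Q sliceG; apply/ffunP=> c; rewrite !ffunE /conv !sum_ffunE.
under eq_bigr => p _ do
  rewrite [vscale _ _ _]ffunE [hmul K _ _ _]ffunE /= -/(slice _ y) sliceG
          slice_bvec hmul_vscale // [vscale _ _ _]ffunE mulrCA.
rewrite (sum_pair_delta (fun p => smash_comul H act h p * _)) /=.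
under eq_bigr => q _ do rewrite [smash_comul _ _ _ _]ffunE /= -surjective_pairing.
rewrite (@tmap_contract _ _ (fun u v => hmul H u (Q v))) => [|v|u]; last 2 first.
- exact: mul_linl.
- exact: linmap_comp (mul_linr _) lin_Q.
by apply: eq_bigr => p _; rewrite ffunE.
Qed.

Lemma Ptw_smash_slice r h y :
  slice (Ptw K r id h) y = Ptw H r (act y) (act (y ^- r)%g (slice h (y ^+ r)%g)).
Proof.
elim: r h => [|r IH] h.
  by apply/ffunP=> c; rewrite !ffunE /= expg0 invg1 act1.
have iter_idE (v : vec k (I * gT)%type) : iter r.+1 id v = v := iter_fix _ (erefl v).
rewrite PtwS_act // expgS [LHS]/= (eq_conv K iter_idE (frefl _)).
apply: smash_conv_slice => [|q].
- exact: linmap_comp (Ptw_linmap _ _ _ _) (act_lin _).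
- rewrite IH slice_bvec (linmapZ (act_lin _)).
  by rewrite (linmapZ (Ptw_linmap comul_lin counit_lin _ _)).
Qed.

Lemma nu_smash m : (0 < m)%N ->
  nu K m = \sum_(x : gT) (x ^+ m == 1)%g%:R * nu_tw H m (act x^-1%g).
Proof.
move=> m_gt0; rewrite /nu /nu_tw /trace sum_pair_r; apply: eq_bigr => x _.
have lin_P := Ptw_linmap comul_lin counit_lin m.-1 (act x^-1%g).
under eq_bigr => i _ do rewrite ffunE /= Ptw_smash_slice slice_bvec (linmapZ (act_lin _))
  (linmapZ lin_P) (linmapZ anti_lin) (linmapZ (act_lin _)) ffunE /=.
rewrite -mulr_sumr eq_expVg_pred //.
case: (boolP (x ^+ m == 1)%g) => [xm1|_]; last by rewrite !mul0r.
have -> : (x^-1 ^+ m.-1)%g = x by apply/esym/eqP; rewrite eq_expVg_pred.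
rewrite !mul1r.
have := traceC (act_lin x) (linmap_comp (linmap_comp anti_lin lin_P) (act_lin x^-1%g)).
rewrite /trace /= => ->.
by apply: eq_bigr => i _; rewrite act_comp // mulVg act1.
Qed.

End Smash.

Theorem theorem5p3 (k : fieldType) (I : finType) (H : hopf_ops k I)
  (gT : finGroupType) (act : gT -> vec k I -> vec k I) :
  is_hopf H ->
  (forall g : gT, is_hopf_aut H (act g)) ->
  act 1%g =1 id ->
  (forall g h : gT, act (g * h)%g =1 act g \o act h) ->
  forall m : nat, (0 < m)%N ->
  nu (smash_coprod H act) m = \sum_(g : gT | (g ^+ m == 1)%g) nu_tw H m (act g).
Proof.
move=> [[mul_linl mul_linr comul_lin counit_lin anti_lin] _] act_aut act1 actM m m_gt0.
have act_lin g : linmap (act g) by case: (act_aut g) => [[]].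
have act_comul g u : hcomul H (act g u) = tmap (act g) (act g) (hcomul H u).
  by case: (act_aut g) => [_ []].
rewrite nu_smash // [RHS](reindex_inj invg_inj) [RHS]big_mkcond /=.
apply: eq_bigr => x _; rewrite expgVn invg_eq1.
by case: (x ^+ m == 1)%g; rewrite ?mul1r ?mul0r.
Qed.
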